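(* Under the setup in the context, for every $\delta>0$, the event $$\mathcal E=\bigcup_{j=1}^{K}\bigcup_{i=1}^{\infty}\bigl\{|\tilde\mu_{j,i}-\mu_j|>U(i,\delta)\bigr\}$$ satisfies $\mathbb P(\mathcal E)\le\delta$.
   Context: There are $K$ arms. For each arm $j\in[K]=\{1,\dots,K\}$, the rewards $r_{j,1},r_{j,2},\dots$ are i.i.d. real random variables with values in a fixed interval $[a,b]$ and mean $\mu_j$, and they are $\sigma^2$-subgaussian in the sense that $\mathbb P(|r_{j,k}-\mu_j|>t)\le 2e^{-t^2/(2\sigma^2)}$ for all $t>0$; moreover empirical means satisfy $\mathbb P(|\frac1n\sum_{k=1}^n r_{j,k}-\mu_j|>t)\le 2e^{-nt^2/(2\sigma^2)}$ for all $n\ge1,t>0$. Rewards of different arms are independent. Fix integers $B\ge 1$ and $\alpha\ge 2$, and set $t_i=\alpha^i$ for $i\ge1$. For $\delta>0$ and $i\ge 1$ define $$U'(i,\delta)=\sigma\sqrt{\frac{2\log(4Kt_i^2/\delta)}{t_i}},$$ and define $U(i,\delta)$ recursively by $U(0,\delta)=b-a$ and $$U(i,\delta)=\frac{1}{2^B}\bigl[U'(i,\delta)+U(i-1,\delta)\bigr]+U'(i,\delta)\quad(i\ge1).$$ Let $\hat\mu_{j,i}=\frac1{t_i}\sum_{k=1}^{t_i}r_{j,k}$. Quantizer: for a real interval $[\ell,u]$, divide it into $2^B$ consecutive bins of equal width $(u-\ell)/2^B$; for any $x\in\mathbb R$, $Q_{[\ell,u]}(x)$ denotes the midpoint of a bin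 whose midpoint is nearest to $x$. Decoded estimates: $\tilde\mu_{j,0}$ is drawn uniformly from $[a,b]$, and for $i\ge1$, $$\tilde\mu_{j,i}=Q_{I_{j,i}}(\hat\mu_{j,i}),\qquad I_{j,i}=\bigl[\tilde\mu_{j,i-1}-U(i-1,\delta)-U'(i,\delta),\ \tilde\mu_{j,i-1}+U(i-1,\delta)+U'(i,\delta)\bigr].$$ *)

From HB Require Import structures.
From mathcomp Require Import all_boot all_order all_algebra.
From mathcomp Require Import all_classical all_reals all_analysis.
Set Implicit Arguments. Unset Strict Implicit. Unset Printing Implicit Defensive.
Import Order.TTheory GRing.Theory Num.Theory.
Import numFieldNormedType.Exports.
Local Open Scope classical_set_scope.
Local Open Scope ring_scope.

Definition mutually_independent d (T : measurableType d) (R : realType)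
    (P : probability T R) (I : eqType) (X : I -> {RV P >-> R}) : Prop :=
  forall (J : seq I) (B : I -> set R), uniq J ->
    (forall i, i \in J -> measurable (B i)) ->
    P (\big[setI/setT]_(i <- J) (X i @^-1` B i)) =
    (\big[*%E/1%E]_(i <- J) P (X i @^-1` B i))%E.

Definition tt (R : realType) (alpha i : nat) : R := (alpha ^ i)%:R.

Definition Uprime (R : realType) (K alpha : nat) (sigma : R) (i : nat) (delta : R) : R :=
  sigma * Num.sqrt (2 * ln (4 * K%:R * (tt R alpha i) ^+ 2 / delta) / tt R alpha i).

Fixpoint Ubound (R : realType) (K alpha B : nat) (sigma a b : R) (i : nat) (delta : R) : R :=
  match i with
  | 0 => b - a
  | i'.+1 => (2 ^+ B)^-1 * (Uprime K alpha sigma i'.+1 delta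
                             + Ubound K alpha B sigma a b i' delta)
             + Uprime K alpha sigma i'.+1 delta
  end.

Definition bin_mid (R : realType) (B : nat) (l u : R) (k : nat) : R :=
  l + (k%:R + 2^-1) * ((u - l) / 2 ^+ B).

(* y is a value of the quantizer Q_[l,u](x): y is the midpoint of a bin of [l,u]
   whose midpoint is nearest to x (any tie-breaking is allowed). *)
Definition is_quantization (R : realType) (B : nat) (l u x y : R) : Prop :=
  exists k : 'I_(2 ^ B), y = bin_mid B l u k /\
    forall k' : 'I_(2 ^ B), `|x - bin_mid B l u k| <= `|x - bin_mid B l u k'|.

From HB Require Import structures.
From mathcomp Require Import all_boot all_order all_algebra.
From mathcomp Require Import all_classical all_reals all_analysis.
From mathcomp Require Import ring lra.

Set Implicit Arguments. Unset Strict Implicit. Unset Printing Implicit Defensive.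

Import Order.TTheory GRing.Theory Num.Theory.
Import numFieldNormedType.Exports.
Local Open Scope classical_set_scope.
Local Open Scope ring_scope.

(* Call a sample point good when every initial decoded estimate mu~_{j,0} lies
   in [a, b] and, at every round i >= 1, every empirical mean mu^_{j,i} lies
   within U'(i) of mu_j.  At a good point a deterministic induction on i gives
   |mu~_{j,i} - mu_j| <= U(i): the quantization interval I_{j,i} then contains
   mu^_{j,i}, so the selected bin midpoint is within half a bin width,
   2^-B (U(i-1) + U'(i)), of mu^_{j,i}.

   The bad points are covered by the round failures: at round i some arm has
   mu~_{j,0} outside [a, b] (a null event, mu~_{j,0} being uniform on [a, b])
   or |mu^_{j,i} - mu_j| > U'(i), which by the concentration hypothesis has
   probability at most 2 exp(-t_i U'(i)^2 / (2 sigma^2)) = delta / (2 K t_i^2)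
   ([Uprime_tail]).  A union bound over the K arms bounds the failure
   probability of round i by delta / 2^i, and a union bound over the rounds
   gives delta. *)


Lemma unit_interval_index (R : realType) (N : nat) (y : R) :
  (0 < N)%N -> 0 <= y <= N%:R -> exists k : 'I_N, k%:R <= y <= k%:R + 1.
Proof.
move=> N_gt0 /andP[y_ge0 y_leN].
have /andP[trunc_le trunc_gt] := truncn_itv y_ge0.
have [lt_truncN|le_Ntrunc] := ltnP (Num.truncn y) N.
  by exists (Ordinal lt_truncN); rewrite /= trunc_le natr1 ltW.
have yN : y = N%:R.
  by apply/eqP; rewrite eq_le y_leN (le_trans _ trunc_le) // ler_nat.
have last_lt : (N.-1 < N)%N by rewrite ltn_predL.
exists (Ordinal last_lt); rewrite /= yN natr1 prednK // lexx andbT ler_nat.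
exact: leq_pred.
Qed.

Lemma bin_near (R : realType) (B : nat) (l u x : R) : l <= x <= u ->
  exists k : 'I_(2 ^ B), `|x - bin_mid B l u k| <= (u - l) / 2 / 2 ^+ B.
Proof.
move=> /andP[lx xu].
have pow_gt0 : (0 : R) < 2 ^+ B by rewrite exprn_gt0.
set w := (u - l) / 2 ^+ B.
have -> : (u - l) / 2 / 2 ^+ B = w / 2 by rewrite /w mulrAC.
have w_ge0 : 0 <= w by rewrite divr_ge0 ?subr_ge0 ?(le_trans lx) // ltW.
have [w0|w_gt0] := eqVneq w 0.
  have ul : u = l.
    move/eqP: w0; rewrite mulf_eq0 invr_eq0 (gt_eqF pow_gt0) orbF subr_eq0.
    by move/eqP.
  have xl : x = l by apply/eqP; rewrite eq_le lx -ul xu.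
  exists (Ordinal (expn_gt0 2 B)); rewrite /bin_mid -/w w0 mulr0 addr0 xl.
  by rewrite subrr normr0 mul0r.
have {w_gt0}w_gt0 : 0 < w by rewrite lt_def w_gt0 w_ge0.
have [k /andP[k_le k_ge]] : exists k : 'I_(2 ^ B),
    k%:R <= (x - l) / w <= k%:R + 1.
  apply: unit_interval_index; first by rewrite expn_gt0.
  rewrite divr_ge0 ?subr_ge0 //= ler_pdivrMr // /w natrX.
  by rewrite mulrCA mulfV ?gt_eqF // mulr1 lerD2r.
exists k; rewrite /bin_mid -/w.
have -> : x - (l + (k%:R + 2^-1) * w) = ((x - l) / w - k%:R - 2^-1) * w.
  by field; rewrite gt_eqF.
rewrite normrM (gtr0_norm w_gt0) mulrC ler_pM2l // ler_norml.
apply/andP; split; lra.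
Qed.

Lemma quantization_error (R : realType) (B : nat) (l u x y : R) :
  l <= x <= u -> is_quantization B l u x y -> `|y - x| <= (u - l) / 2 / 2 ^+ B.
Proof.
move=> lxu [k [-> nearest]]; have [k' near_k'] := bin_near B lxu.
by rewrite distrC (le_trans (nearest k')).
Qed.

(* One decoding step: if the previous estimate m is within U of mu and the
   empirical mean h is within U' of mu, then h lies in the quantization
   interval [m - U - U', m + U + U'], so its quantization is within
   2^-B (U' + U) + U' of mu. *)
Lemma quantized_estimate_error (R : realType) (B : nat) (m mu h y U U' : R) :
  `|m - mu| <= U -> `|h - mu| <= U' ->
  is_quantization B (m - U - U') (m + U + U') h y ->
  `|y - mu| <= (2 ^+ B)^-1 * (U' + U) + U'.
Proof.
move=> m_near h_near quant.
have h_in : m - U - U' <= h <= m + U + U'.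
  move: m_near h_near; rewrite !ler_norml => /andP[? ?] /andP[? ?].
  by apply/andP; split; lra.
have := quantization_error h_in quant.
have -> : (m + U + U' - (m - U - U')) / 2 / 2 ^+ B = (2 ^+ B)^-1 * (U' + U).
  by field; rewrite expf_neq0.
move=> y_near; have -> : y - mu = (y - h) + (h - mu) by ring.
exact: le_trans (ler_normD _ _) (lerD y_near h_near).
Qed.

Lemma decoded_estimate_error (R : realType) (B : nat)
    (bound radius m h : nat -> R) (mu : R) :
  (forall i, bound i.+1 = (2 ^+ B)^-1 * (radius i.+1 + bound i) + radius i.+1) ->
  `|m 0%N - mu| <= bound 0%N ->
  (forall i, `|h i.+1 - mu| <= radius i.+1) ->
  (forall i, is_quantization B (m i - bound i - radius i.+1)
               (m i + bound i + radius i.+1) (h i.+1) (m i.+1)) ->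
  forall i, `|m i - mu| <= bound i.
Proof.
move=> bound_rec m0_near h_near quant; elim=> [//|i IH].
by rewrite bound_rec; exact: quantized_estimate_error IH (h_near i) (quant i).
Qed.

Lemma expectation_bounds d (T : measurableType d) (R : realType)
    (P : probability T R) (X : {RV P >-> R}) (a b : R) :
  (forall x, a <= X x <= b) -> (a%:E <= 'E_P[X] <= b%:E)%E.
Proof.
move=> X_ab; rewrite expectation_def.
have X_int : P.-integrable setT (EFin \o X).
  apply: measurable_bounded_integrable => //.
    exact: le_lt_trans (probability_le1 P measurableT) (ltry _).
  rewrite /bounded_near; near=> M => x _ /=.
  have /andP[a_le b_ge] := X_ab x.
  apply: (@le_trans _ _ (`|a| + `|b|)); last by near: M; exact: nbhs_pinfty_ge.
  have := ler_norm (- a); have := ler_norm b; rewrite normrN ler_norml.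
  by have := normr_ge0 a; have := normr_ge0 b; move=> *; apply/andP; split; lra.
have cst_integral (c : R) : c%:E = (\int[P]_x (EFin \o cst c) x)%E.
  by rewrite -[EFin \o cst c]/(cst c%:E) integral_cst //= probability_setT mule1.
have cst_int (c : R) : P.-integrable setT (EFin \o cst c).
  exact: finite_measure_integrable_cst.
by apply/andP; split; rewrite cst_integral; apply: le_integral => // x _;
  rewrite lee_fin; have /andP[] := X_ab x.
Unshelve. all: end_near. Qed.

Lemma measurable_dist_gt d (T : measurableType d) (R : realType) (f : T -> R)
    (c m : R) :
  measurable_fun setT f -> measurable [set x | c < `|f x - m|].
Proof.
move=> f_meas; have dist_meas : measurable_fun setT (fun x => `|f x - m|).
  apply: measurableT_comp (@measurable_realfun.normr_measurable R setT) _.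
  exact: measurable_realfun.measurable_funB f_meas (measurable_cst m).
have := measurable_realfun.measurable_fun_ltr (measurable_cst c) dist_meas.
by move=> /(_ measurableT [set true] I); rewrite setTI.
Qed.

Lemma uniform_outside_null d (T : measurableType d) (R : realType)
    (P : probability T R) (a b : R) (ab : a < b) (X : {RV P >-> R}) :
  (forall A, measurable A -> distribution P X A = uniform_prob ab A) ->
  P (X @^-1` (~` `[a, b])) = 0%E.
Proof.
move=> X_unif; transitivity (distribution P X (~` `[a, b])); first by [].
rewrite X_unif; last exact: measurableC (measurable_itv _).
by rewrite /uniform_prob integral_uniform_pdf setICl integral_set0.
Qed.

Lemma measure_bigcup_fin_le d (T : measurableType d) (R : realType)
    (mu : {measure set T -> \bar R}) (I : finType) (F : I -> set T) :
  (forall i, measurable (F i)) ->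
  (mu (\bigcup_i F i) <= \sum_i mu (F i))%E.
Proof.
move=> F_meas.
have -> : \bigcup_i F i = \big[setU/set0]_(i <- index_enum I) F i.
  rewrite -bigcup_seq; congr (\bigcup_(i in _) _).
  by apply/seteqP; split => i // _; rewrite /= mem_index_enum.
elim: (index_enum I) => [|i s IH]; first by rewrite !big_nil measure0.
rewrite !big_cons; apply: le_trans (measureU2 _ _ _) (leeD2l _ IH) => //.
exact: bigsetU_measurable.
Qed.

Lemma tt_ge_pow2 (R : realType) (alpha i : nat) :
  (2 <= alpha)%N -> (2 ^ i)%:R <= tt R alpha i.
Proof.
by move=> alpha2; rewrite /tt ler_nat; case: i => // i; rewrite leq_exp2r.
Qed.

Lemma tt_ge1 (R : realType) (alpha i : nat) :
  (2 <= alpha)%N -> 1 <= tt R alpha i.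
Proof.
move=> alpha2; apply: le_trans (tt_ge_pow2 R i alpha2).
by rewrite (ler_nat R 1) expn_gt0.
Qed.

Lemma Uprime_log_arg_gt1 (R : realType) (K alpha i : nat) (delta : R) :
  (0 < K)%N -> (2 <= alpha)%N -> 0 < delta < 1 ->
  1 < 4 * K%:R * tt R alpha i ^+ 2 / delta.
Proof.
move=> K_gt0 alpha2 /andP[delta_gt0 delta_lt1].
have K_ge1 : (1 : R) <= K%:R by rewrite (ler_nat R 1).
have t_ge1 := tt_ge1 R i alpha2.
have t2_ge1 : 1 <= tt R alpha i ^+ 2 by rewrite expr_ge1 // (le_trans _ t_ge1).
rewrite ltr_pdivlMr // mul1r; apply: lt_le_trans delta_lt1 _.
by rewrite -mulrA; nra.
Qed.

(* U'(i) is calibrated so that the sub-Gaussian tail of an empirical mean of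
   t_i samples at deviation U'(i) equals delta / (2 K t_i^2). *)
Lemma Uprime_tail (R : realType) (K alpha i : nat) (sigma delta : R) :
  (0 < K)%N -> (2 <= alpha)%N -> 0 < sigma -> 0 < delta < 1 ->
  2 * expR (- (tt R alpha i * Uprime K alpha sigma i delta ^+ 2) / (2 * sigma ^+ 2))
  = delta / (2 * K%:R * tt R alpha i ^+ 2).
Proof.
move=> K_gt0 alpha2 sigma_gt0 delta01.
have /andP[delta_gt0 _] := delta01.
set t := tt R alpha i.
have t_gt0 : 0 < t by rewrite (lt_le_trans _ (tt_ge1 R i alpha2)).
set X := 4 * K%:R * t ^+ 2 / delta.
have X_gt1 : 1 < X by exact: Uprime_log_arg_gt1.
have rad_ge0 : 0 <= 2 * ln X / t by rewrite divr_ge0 ?mulr_ge0 ?ltW ?ln_gt0.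
rewrite /Uprime -/t -/X exprMn (sqr_sqrtr rad_ge0).
have -> : - (t * (sigma ^+ 2 * (2 * ln X / t))) / (2 * sigma ^+ 2) = - ln X.
  by field; rewrite ?mulf_neq0 ?expf_neq0 ?gt_eqF.
rewrite expRN lnK; last by rewrite posrE (lt_trans _ X_gt1).
have K_gt0' : (0 : R) < K%:R by rewrite ltr0n.
by rewrite /X invf_div; field; rewrite ?mulf_neq0 ?expf_neq0 ?gt_eqF.
Qed.

(* Summed over the K arms, the tail at round i is at most delta / 2^i,
   because 2 t_i^2 >= t_i >= 2^i. *)
Lemma arms_tail_le (R : realType) (K alpha i : nat) (delta : R) :
  (0 < K)%N -> (2 <= alpha)%N -> 0 < delta ->
  K%:R * (delta / (2 * K%:R * tt R alpha i ^+ 2)) <= delta / (2 ^ i)%:R.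
Proof.
move=> K_gt0 alpha2 delta_gt0.
have K_gt0' : (0 : R) < K%:R by rewrite ltr0n.
have t_ge1 := tt_ge1 R i alpha2; have t_ge := tt_ge_pow2 R i alpha2.
set t := tt R alpha i in t_ge1 t_ge *.
have t_gt0 : 0 < t by rewrite (lt_le_trans _ t_ge1).
have -> : K%:R * (delta / (2 * K%:R * t ^+ 2)) = delta / (2 * t ^+ 2).
  by field; rewrite ?mulf_neq0 ?expf_neq0 ?gt_eqF.
have pow_gt0 : (0 : R) < (2 ^ i)%:R by rewrite ltr0n expn_gt0.
rewrite ler_pM2l // lef_pV2 ?posrE ?mulr_gt0 ?exprn_gt0 //.
have t_le_t2 : t <= t ^+ 2 by rewrite expr2 ler_peMr.
lra.
Qed.

Section failure_events.
Context {d : measure_display} {T : measurableType d} {R : realType}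
  {P : probability T R}.
Context {K B alpha : nat} {a b sigma delta : R} {mu : 'I_K -> R}
  {r mt : 'I_K -> nat -> {RV P >-> R}}.

Local Notation U i := (Ubound K alpha B sigma a b i delta).
Local Notation U' i := (Uprime K alpha sigma i delta).

Definition emp_mean (j : 'I_K) (i : nat) (x : T) : R :=
  (tt R alpha i)^-1 * \sum_(k < alpha ^ i) r j k x.

Definition arm_failure (j : 'I_K) (n : nat) : set T :=
  mt j 0%N @^-1` (~` `[a, b]) `|` [set x | U' n.+1 < `|emp_mean j n.+1 x - mu j|].

Definition round_failure (n : nat) : set T := \bigcup_j arm_failure j n.

Definition failure_event : set T :=
  [set x | exists (j : 'I_K) (i : nat), (1 <= i)%N /\ U i < `|mt j i x - mu j|].

Lemma emp_mean_measurable j i : measurable_fun setT (emp_mean j i).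
Proof.
apply: measurable_realfun.measurable_funM (measurable_cst _) _.
by apply: measurable_sum => k; exact: measurable_funPT.
Qed.

Lemma initial_outside_measurable j : measurable (mt j 0%N @^-1` (~` `[a, b])).
Proof. exact: measurable_funPTI (measurableC (measurable_itv _)). Qed.

Lemma deviation_measurable j n :
  measurable [set x | U' n.+1 < `|emp_mean j n.+1 x - mu j|].
Proof. exact/measurable_dist_gt/emp_mean_measurable. Qed.

Lemma round_failure_measurable n : measurable (round_failure n).
Proof.
apply: fin_bigcup_measurable => [|j _]; first exact: finite_finset.
exact: measurableU (initial_outside_measurable j) (deviation_measurable j n).
Qed.

Lemma failure_event_measurable : measurable failure_event.
Proof.
have -> : failure_event =
    \bigcup_n \bigcup_j [set x | U n.+1 < `|mt j n.+1 x - mu j|].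
  apply/seteqP; split => x.
    by move=> [j [[|i] [// _ x_fail]]]; exists i => //; exists j.
  by move=> [i _ [j _ x_fail]]; exists j, i.+1.
apply: bigcupT_measurable => i.
apply: fin_bigcup_measurable => [|j _]; first exact: finite_finset.
exact/measurable_dist_gt/measurable_funPT.
Qed.

Hypothesis rewards_in_ab : forall j k x, a <= r j k x <= b.
Hypothesis rewards_mean : forall j k, ('E_P[r j k] = (mu j)%:E)%E.
Hypothesis decoding : forall j i x, (1 <= i)%N ->
  is_quantization B (mt j i.-1 x - U i.-1 - U' i) (mt j i.-1 x + U i.-1 + U' i)
    (emp_mean j i x) (mt j i x).

Lemma failure_event_sub : failure_event `<=` \bigcup_n round_failure n.
Proof.
move=> x [j [i [_ x_fail]]]; apply: contrapT => x_uncovered.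
have arm_ok n j' : ~ arm_failure j' n x.
  by move=> arm_fails; apply: x_uncovered; exists n => //; exists j'.
have init_in : a <= mt j 0%N x <= b.
  apply/negPn/negP => x_out; apply: (arm_ok 0%N j); left.
  by rewrite /preimage /setC /= in_itv /=; exact/negP.
have mu_in : a <= mu j <= b.
  by rewrite -!lee_fin -(rewards_mean j 0); exact: expectation_bounds.
have means_near n : `|emp_mean j n.+1 x - mu j| <= U' n.+1.
  by rewrite leNgt; apply/negP => dev; apply: (arm_ok n j); right.
have init_near : `|mt j 0%N x - mu j| <= U 0%N.
  by rewrite /= ler_norml; apply/andP; split; lra.
have := decoded_estimate_error (bound := fun i => U i) (radius := fun i => U' i)
  (m := fun i => mt j i x) (h := fun i => emp_mean j i x) (fun=> erefl)
  init_near means_near (fun n => decoding j x (ltn0Sn n)) i.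
by rewrite leNgt x_fail.
Qed.

Hypothesis K_gt0 : (0 < K)%N.
Hypothesis alpha_ge2 : (2 <= alpha)%N.
Hypothesis sigma_gt0 : 0 < sigma.
Hypothesis ab : a < b.
Hypothesis mean_concentration : forall j n (t : R), (1 <= n)%N -> 0 < t ->
  (P [set x | (t < `|(n%:R)^-1 * (\sum_(k < n) r j k x) - mu j|)%R] <=
    (2 * expR (- (n%:R * t ^+ 2) / (2 * sigma ^+ 2)))%R%:E)%E.
Hypothesis initial_uniform : forall j A, measurable A ->
  distribution P (mt j 0%N) A = uniform_prob ab A.

(* Union bound over the arms: round n fails with probability at most
   delta / 2^(n+1), the initial estimates being almost surely in [a, b]. *)
Lemma round_failure_prob n : 0 < delta < 1 ->
  (P (round_failure n) <= (delta / (2 ^ n.+1)%:R)%:E)%E.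
Proof.
move=> delta01; have /andP[delta_gt0 _] := delta01.
have rad_gt0 : 0 < U' n.+1.
  rewrite mulr_gt0 // sqrtr_gt0 divr_gt0 ?mulr_gt0 ?ln_gt0 ?Uprime_log_arg_gt1 //.
  exact: lt_le_trans (tt_ge1 R n.+1 alpha_ge2).
have samples_ge1 : (1 <= alpha ^ n.+1)%N.
  by rewrite expn_gt0 (leq_trans _ alpha_ge2).
have arm_prob j : (P (arm_failure j n) <=
    (delta / (2 * K%:R * tt R alpha n.+1 ^+ 2))%:E)%E.
  apply: le_trans (measureU2 _ (initial_outside_measurable j)
                                (deviation_measurable j n)) _.
  rewrite -[X in (_ <= X)%E]add0e; apply: leeD.
    by rewrite le_eqVlt; apply/orP; left; apply/eqP;
      exact: uniform_outside_null (initial_uniform j).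
  rewrite -(Uprime_tail n.+1 K_gt0 alpha_ge2 sigma_gt0 delta01).
  exact: mean_concentration samples_ge1 rad_gt0.
have arm_meas j : measurable (arm_failure j n).
  exact: measurableU (initial_outside_measurable j) (deviation_measurable j n).
move: (measure_bigcup_fin_le P arm_meas) => /le_trans; apply.
set arm_bound := delta / (2 * K%:R * tt R alpha n.+1 ^+ 2).
apply: (@le_trans _ _ (\sum_(j < K) arm_bound%:E)%E).
  by apply: lee_sum => j _; exact: arm_prob.
rewrite sumEFin lee_fin sumr_const card_ord -[_ *+ K]mulr_natl.
exact: arms_tail_le.
Qed.

End failure_events.

Theorem lemma2 (d : measure_display) (T : measurableType d) (R : realType)
  (P : probability T R) (K B alpha : nat) (a b sigma : R) (ab : a < b)
  (mu : 'I_K -> R)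
  (r : 'I_K -> nat -> {RV P >-> R})
  (mt : 'I_K -> nat -> {RV P >-> R})
  (delta : R) :
  (0 < K)%N -> (1 <= B)%N -> (2 <= alpha)%N -> 0 < sigma ->
  (* rewards take values in [a, b] *)
  (forall j k x, a <= r j k x <= b) ->
  (* mean mu_j *)
  (forall j k, ('E_P[r j k] = (mu j)%:E)%E) ->
  (* identically distributed within each arm *)
  (forall j k A, measurable A ->
     distribution P (r j k) A = distribution P (r j 0%N) A) ->
  (* independence (within arms and across arms) *)
  mutually_independent (fun jk : 'I_K * nat => r jk.1 jk.2) ->
  (* sigma^2-subgaussian tails *)
  (forall j k (t : R), 0 < t ->
     (P [set x | (t < `|r j k x - mu j|)%R] <=
       (2 * expR (- (t ^+ 2) / (2 * sigma ^+ 2)))%R%:E)%E) ->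
  (* concentration of empirical means *)
  (forall j n (t : R), (1 <= n)%N -> 0 < t ->
     (P [set x | (t < `|(n%:R)^-1 * (\sum_(k < n) r j k x) - mu j|)%R] <=
       (2 * expR (- (n%:R * t ^+ 2) / (2 * sigma ^+ 2)))%R%:E)%E) ->
  (* initial decoded estimate uniform on [a, b] *)
  (forall j A, measurable A ->
     distribution P (mt j 0%N) A = uniform_prob ab A) ->
  (* decoded estimates: mt j i = Q_{I_{j,i}}(hat mu_{j,i}) *)
  (forall j i x, (1 <= i)%N ->
     is_quantization B
       (mt j i.-1 x - Ubound K alpha B sigma a b i.-1 delta - Uprime K alpha sigma i delta)
       (mt j i.-1 x + Ubound K alpha B sigma a b i.-1 delta + Uprime K alpha sigma i delta)
       ((tt R alpha i)^-1 * \sum_(k < alpha ^ i) r j k x)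
       (mt j i x)) ->
  0 < delta ->
  (P [set x | exists (j : 'I_K) (i : nat), (1 <= i)%N /\
        (Ubound K alpha B sigma a b i delta < `|mt j i x - mu j|)%R ] <= delta%:E)%E.
Proof.
move=> K_gt0 _ alpha_ge2 sigma_gt0 rewards_in_ab rewards_mean _ _ _
  mean_concentration initial_uniform decoding delta_gt0.
set E := [set x | _].
have fail_meas : measurable E := failure_event_measurable.
have [delta_ge1|delta_lt1] := leP 1 delta.
  by apply: le_trans (probability_le1 P fail_meas) _; rewrite lee_fin.
have fail_sub := failure_event_sub rewards_in_ab rewards_mean decoding.
apply: le_trans (measure_sigma_subadditive P round_failure_measurable
                                           fail_meas fail_sub) _.
apply: le_trans (epsilon_trick0 xpredT (ltW delta_gt0)).
apply: lee_nneseries => [n _ _|n _]; first exact: measure_ge0.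
apply: (round_failure_prob K_gt0 alpha_ge2 sigma_gt0 mean_concentration
                           initial_uniform).
by rewrite delta_gt0.
Qed.
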